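(* Let $n\ge 2$ and let $F:(\mathcal{M}^n)^n\to\mathbb{R}$ be a nonnegative function which is additive in each variable and which vanishes whenever two of its arguments are proportional matrices of rank one. Define $G:(\mathcal{E}^n)^n\to\mathbb{R}$ by $G(E_1,\dots,E_n)=F(A_{E_1},\dots,A_{E_n})$. Let $S,T_1,T_2\subset\mathbb{R}^n$ be nondegenerate centered segments satisfying $T_1+\mathbb{R}S=T_2+\mathbb{R}S$. Then $G(T_1,S,E_1,\dots,E_{n-2})=G(T_2,S,E_1,\dots,E_{n-2})$ for all $E_1,\dots,E_{n-2}\in\mathcal{E}^n$. The same holds when the roles of the first two arguments are played by any two other arguments, in any order (i.e. $T_i$ placed in position $p$, $S$ in position $q\ne p$, and arbitrary centered ellipsoids in the remaining positions).
   Context: $\mathcal{M}^n$ is the set of real symmetric positive semidefinite $n\times n$ matrices; ''additive in each variable'' means $F(\dots,A+A',\dots)=F(\dots,A,\dots)+F(\dots,A',\dots)$ in each argument with the others fixed. A centered ellipsoid is a set $TB^n$ where $B^n$ is the Euclidean unit ball of $\mathbb{R}^n$ and $T:\mathbb{R}^n\to\mathbb{R}^n$ is any linear map (possibly degenerate); $\mathcal{E}^n$ is the set of centered ellipsoids (this includes centered segments $[-x,x]$ and $\{0\}$). For $E\in\mathcal{E}^n$, $A_E\in\mathcal{M}^n$ is the unique matrix with $h(E,u)^2=\langle u,A_Eu\rangle$ for all $u\in\mathbb{R}^n$, where $h(E,u)=\max_{x\in E}\langle x,u\rangle$ is the support function (if $E=TB^n$ then $A_E=TT^*$). For a set $S$,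 $\mathbb{R}S=\{\lambda x:\lambda\in\mathbb{R},x\in S\}$, and $+$ denotes Minkowski addition. A centered segment is nondegenerate if it has positive length. *)

From HB Require Import structures.
From mathcomp Require Import all_boot all_order all_algebra.
From mathcomp Require Import classical_sets boolp reals.
Set Implicit Arguments. Unset Strict Implicit. Unset Printing Implicit Defensive.
Import Order.TTheory GRing.Theory Num.Theory.
Local Open Scope classical_set_scope.
Local Open Scope ring_scope.

Section Defs.
Variables (R : realType) (n : nat).

Definition ip (x y : 'rV[R]_n) : R := (x *m y^T) 0 0.

Definition psd (A : 'M[R]_n) : Prop :=
  A^T = A /\ forall u : 'rV[R]_n, 0 <= ip u (u *m A).

Definition unit_ball : set 'rV[R]_n := [set x | ip x x <= 1].

(* centered ellipsoids: T B^n for an arbitrary (possibly degenerate) linear map T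
   (x |-> x *m T in the row-vector convention) *)
Definition is_cellipsoid (E : set 'rV[R]_n) : Prop :=
  exists T : 'M[R]_n, E = [set x *m T | x in unit_ball].

Definition cseg (x : 'rV[R]_n) : set 'rV[R]_n :=
  [set t *: x | t in [set t : R | -1 <= t <= 1]].

Definition supp (E : set 'rV[R]_n) (u : 'rV[R]_n) : R :=
  sup [set ip x u | x in E].

Definition AE (E : set 'rV[R]_n) : 'M[R]_n :=
  xget 0 [set A | psd A /\ forall u, supp E u ^+ 2 = ip u (u *m A)].

Definition msum (A B : set 'rV[R]_n) : set 'rV[R]_n :=
  [set a + b | a in A & b in B].
Definition rline (S : set 'rV[R]_n) : set 'rV[R]_n :=
  [set l *: x | l in [set: R] & x in S].

Definition setat (T : Type) (f : 'I_n -> T) (i : 'I_n) (y : T) : 'I_n -> T :=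
  fun j => if j == i then y else f j.

Definition all_psd (A : 'I_n -> 'M[R]_n) := forall i, psd (A i).

Definition F_nonneg (F : ('I_n -> 'M[R]_n) -> R) : Prop :=
  forall A, all_psd A -> 0 <= F A.

Definition F_multiadditive (F : ('I_n -> 'M[R]_n) -> R) : Prop :=
  forall A i (B : 'M[R]_n), all_psd A -> psd B ->
    F (setat A i (A i + B)) = F A + F (setat A i B).

Definition F_vanish_prop_rank1 (F : ('I_n -> 'M[R]_n) -> R) : Prop :=
  forall A (i j : 'I_n), all_psd A -> i != j ->
    \rank (A i) = 1%N -> \rank (A j) = 1%N -> (exists c : R, A j = c *: A i) ->
    F A = 0.

Definition G (F : ('I_n -> 'M[R]_n) -> R) (E : 'I_n -> set 'rV[R]_n) : R :=
  F (fun i => AE (E i)).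

End Defs.

From HB Require Import structures.
From mathcomp Require Import all_boot all_order all_algebra.
From mathcomp Require Import classical_sets boolp reals.
From mathcomp Require Import ring lra.
Import Order.TTheory GRing.Theory Num.Theory.
Local Open Scope classical_set_scope.
Local Open Scope ring_scope.

(* A_[-t,t] is the rank-one matrix t^T t, so every statement about G at a
   segment becomes one about F at such a matrix.  Fix all slots except p, put
   s^T s in slot q, and let f(x) be F evaluated with (t + x s)^T (t + x s) in
   slot p.  The parallelogram law for u |-> u^T u, additivity in slot p, and
   the vanishing of F on the proportional pair (s^T s, s^T s) give
   f(x+h) + f(x-h) = 2 f(x); a nonnegative solution of this Jensen equation on
   R is constant.  Finally T_1 + RS = T_2 + RS forces t_2 = ±(t_1 + l s) when
   t_1 is not parallel to s, and t_1, t_2 both parallel to s otherwise. *)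

Section JensenEquation.
Context {V : zmodType} {R : archiRealFieldType} {f : V -> R}.
Hypothesis f_mid : forall x h, f (x + h) + f (x - h) = f x + f x.

Lemma jensen_natmul (m : V) (k : nat) : f (m *+ k) = f 0 + k%:R * (f m - f 0).
Proof.
suff [] : f (m *+ k) = f 0 + k%:R * (f m - f 0) /\
          f (m *+ k.+1) = f 0 + k.+1%:R * (f m - f 0) by [].
elim: k => [|k [IHk IHk1]]; first by rewrite mulr0n mul0r addr0 mul1r addrC subrK.
split=> //.
have := f_mid (m *+ k.+1) m.
rewrite IHk1 -mulrSr (mulrSr m k) addrK IHk => mid.
have -> : f (m *+ k.+2) = f 0 + k.+1%:R * (f m - f 0) + (f 0 + k.+1%:R * (f m - f 0))
                          - (f 0 + k%:R * (f m - f 0)) by rewrite -mid addrK.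
rewrite -[k.+2]addn1 -[k.+1]addn1 !natrD; ring.
Qed.

Lemma jensen_const_of_ge0 : (forall x, 0 <= f x) -> forall m, f m = f 0.
Proof.
move=> f_ge0 m; set d := f m - f 0.
have fN : f (- m) - f 0 = - d by have := f_mid 0 m; rewrite add0r sub0r /d; lra.
have bound k : 0 <= f 0 - k%:R * `|d|.
  case: (lerP 0 d) => [d_ge0 | d_lt0].
    by have := f_ge0 ((- m) *+ k); rewrite jensen_natmul fN ger0_norm // mulrN.
  by have := f_ge0 (m *+ k); rewrite jensen_natmul ltr0_norm // mulrN opprK.
apply/eqP; rewrite -subr_eq0 -/d -normr_eq0; apply/negPn/negP => d_neq0.
have d_gt0 : 0 < `|d| by rewrite normr_gt0 -normr_eq0.
have := archi_boundP (divr_ge0 (f_ge0 0) (ltW d_gt0)).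
rewrite ltr_pdivrMr // => lt_bound.
by have := bound (Num.bound (f 0 / `|d|)); rewrite subr_ge0 leNgt lt_bound.
Qed.

End JensenEquation.

Section RankOneMatrices.
Context {R : realType} {n : nat}.
Implicit Types (x y u v : 'rV[R]_n) (A B D : 'M[R]_n).

Definition outer x : 'M[R]_n := x^T *m x.

Lemma ipC x y : ip x y = ip y x.
Proof. by rewrite /ip -[x *m _]trmxK trmx_mul trmxK mxE. Qed.

Lemma ipDr x y z : ip x (y + z) = ip x y + ip x z.
Proof. by rewrite /ip linearD /= mulmxDr mxE. Qed.

Lemma ipBr x y z : ip x (y - z) = ip x y - ip x z.
Proof. by rewrite /ip raddfB /= mulmxBr !mxE. Qed.

Lemma ipDl x y z : ip (x + y) z = ip x z + ip y z.
Proof. by rewrite ipC ipDr !(ipC z). Qed.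

Lemma ipZl c x y : ip (c *: x) y = c * ip x y.
Proof. by rewrite /ip -scalemxAl [in LHS]mxE. Qed.

Lemma ip_sym_mulmx D u v : D^T = D -> ip u (v *m D) = ip v (u *m D).
Proof. by move=> symD; rewrite ipC /ip !trmx_mul symD !mulmxA. Qed.

Lemma sym_quadratic_form_eq0 D :
  D^T = D -> (forall u, ip u (u *m D) = 0) -> D = 0.
Proof.
move=> symD qD0; have bilD0 u v : ip u (v *m D) = 0.
  have := qD0 (u + v); rewrite mulmxDl ipDl !ipDr !qD0 add0r addr0.
  by rewrite (ip_sym_mulmx _ v) // -mulr2n => /eqP; rewrite mulrn_eq0 => /eqP.
apply/matrixP => i j; have := bilD0 (delta_mx 0 j) (delta_mx 0 i).
by rewrite /ip -!rowE !mxE.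
Qed.

Lemma sym_eq_of_quadratic_form A B : A^T = A -> B^T = B ->
  (forall u, ip u (u *m A) = ip u (u *m B)) -> A = B.
Proof.
move=> symA symB qAB; apply/eqP; rewrite -subr_eq0; apply/eqP.
apply: sym_quadratic_form_eq0; first by rewrite linearB /= symA symB.
by move=> u; rewrite mulmxBr ipBr qAB subrr.
Qed.

Lemma outer_quadratic_form x u : ip u (u *m outer x) = ip x u ^+ 2.
Proof.
rewrite /ip /outer !trmx_mul trmxK !mulmxA -mulmxA.
rewrite [u *m _]mx11_scalar [x *m _]mx11_scalar -scalar_mxM mxE eqxx mulr1n.
rewrite [_%:M 0 0]mxE eqxx mulr1n.
by change (ip u x * ip x u = ip x u ^+ 2); rewrite ipC expr2.
Qed.

Lemma psd0 : psd (0 : 'M[R]_n).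
Proof. by split=> [|u]; rewrite ?trmx0 // mulmx0 /ip trmx0 mulmx0 mxE. Qed.

Lemma psdD A B : psd A -> psd B -> psd (A + B).
Proof.
move=> [symA A_ge0] [symB B_ge0]; split; first by rewrite linearD /= symA symB.
by move=> u; rewrite mulmxDr ipDr addr_ge0.
Qed.

Lemma psd_outer x : psd (outer x).
Proof.
split=> [|u]; first by rewrite /outer trmx_mul trmxK.
by rewrite outer_quadratic_form sqr_ge0.
Qed.

Lemma outerZ c x : outer (c *: x) = c ^+ 2 *: outer x.
Proof. by rewrite /outer !linearZ /= -scalemxAl scalerA -expr2. Qed.

Lemma outer_parallelogram x y :
  outer (x + y) + outer (x - y) = (outer x + outer x) + (outer y + outer y).
Proof.
rewrite /outer [(x + y)^T]raddfD [(x - y)^T]raddfB /=.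
rewrite !(mulmxDr, mulmxDl, mulmxN, mulNmx) opprK.
set a := x^T *m x; set b := y^T *m x; set c := x^T *m y.
by rewrite addrACA [a + b + _]addrACA [c + _ + _]addrACA subrr addrN addr0 add0r.
Qed.

Lemma rank_outer x : x != 0 -> \rank (outer x) = 1%N.
Proof.
move=> x_neq0; apply/eqP.
rewrite eqn_leq (leq_trans (mxrankM_maxl _ _)) ?rank_leq_col //.
rewrite lt0n mxrank_eq0; apply: contra x_neq0 => /eqP outer0.
apply/eqP/rowP => i; have := congr1 (fun M : 'M[R]_n => M i i) outer0.
by rewrite /outer !mxE big_ord1 !mxE => /eqP; rewrite mulf_eq0 orbb => /eqP.
Qed.

End RankOneMatrices.

Section Segments.
Context {R : realType} {n : nat}.
Implicit Types (x y s u : 'rV[R]_n).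

Lemma supp_cseg x u : supp (cseg x) u = `|ip x u|.
Proof.
rewrite /supp; set S := [set ip y u | y in cseg x].
have ubS : ubound S `|ip x u|.
  move=> _ [_ [t /andP[t_geN1 t_le1] <-] <-]; rewrite ipZl.
  by rewrite (le_trans (ler_norm _)) // normrM ler_piMl // ler_norml t_geN1.
set e : R := if 0 <= ip x u then 1 else -1.
have S_norm : S `|ip x u|.
  exists (e *: x); first by exists e => //; rewrite /e; case: ifP => _ /=; lra.
  rewrite ipZl /e; case: ifPn => [? | ]; first by rewrite mul1r ger0_norm.
  by rewrite -ltNge => ?; rewrite mulN1r ltr0_norm.
apply/eqP; rewrite eq_le ge_sup //=; last by exists `|ip x u|.
by apply: ub_le_sup => //; exists `|ip x u|.
Qed.

Lemma AE_cseg x : AE (cseg x) = outer x.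
Proof.
have quad_outer u : supp (cseg x) u ^+ 2 = ip u (u *m outer x).
  by rewrite supp_cseg outer_quadratic_form real_normK ?num_real.
rewrite /AE; case: xgetP => [A _ [[symA _] quadA] | ]; last first.
  by move=> /(_ (outer x)) []; split; [exact: psd_outer | exact: quad_outer].
apply: sym_eq_of_quadratic_form => // [|u]; first by case: (psd_outer x).
by rewrite -quadA quad_outer.
Qed.

Lemma AE_psd (E : set 'rV[R]_n) : psd (AE E).
Proof. by rewrite /AE; case: xgetP => [A _ [] | _]; last exact: psd0. Qed.

Lemma cseg_slab_mem {x y s} :
  msum (cseg x) (rline (cseg s)) = msum (cseg y) (rline (cseg s)) ->
  exists a l, -1 <= a <= 1 /\ y = a *: x + l *: s.
Proof.
have cseg_self z : cseg z z by exists 1; rewrite ?scale1r //=; lra.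
move=> slab_eq; have : msum (cseg y) (rline (cseg s)) y.
  exists y => //; exists 0; rewrite ?addr0 //.
  by exists 0 => //; exists s; rewrite ?scale0r.
rewrite -slab_eq => -[_ [a a_bd <-]] [_ [l _ [_ [b _ <-]] <-]] <-.
by exists a, (l * b); rewrite scalerA.
Qed.

Lemma cseg_slab_eq_cases {t1 t2 s} :
  msum (cseg t1) (rline (cseg s)) = msum (cseg t2) (rline (cseg s)) ->
  ((exists c, t1 = c *: s) /\ (exists c, t2 = c *: s)) \/
  exists a l, a ^+ 2 = 1 /\ t2 = a *: (t1 + l *: s).
Proof.
move=> slab_eq.
have [a [l [/andP[a_geN1 a_le1] t2E]]] := cseg_slab_mem slab_eq.
have [b [m [/andP[b_geN1 b_le1] t1E]]] := cseg_slab_mem (esym slab_eq).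
have [[c t1_par] | t1_npar] := pselect (exists c, t1 = c *: s).
  left; split; first by exists c.
  by exists (a * c + l); rewrite t2E t1_par scalerA scalerDl.
right; have ba1 : b * a = 1.
  have [//|ba_neq1] := eqVneq (b * a) 1; case: t1_npar.
  have ba_neq1' : 1 - b * a != 0 by rewrite subr_eq0 eq_sym.
  exists ((1 - b * a)^-1 * (b * l + m)); rewrite -scalerA.
  have -> : (b * l + m) *: s = (1 - b * a) *: t1.
    have t1_eq : t1 = (b * a) *: t1 + (b * l + m) *: s.
      by rewrite {1}t1E t2E scalerDr !scalerA -addrA -scalerDl.
    by rewrite scalerBl scale1r {1}t1_eq addrAC subrr add0r.
  by rewrite scalerA mulVf // scale1r.
have a2 : a ^+ 2 = 1 by rewrite expr2; have [] := lerP 0 a; nra.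
exists a, (l * a); split=> //.
by rewrite t2E scalerDr !scalerA mulrCA -expr2 a2 mulr1.
Qed.

End Segments.

Lemma setat_id (n : nat) (T : Type) (f : 'I_n -> T) i y : setat f i y i = y.
Proof. by rewrite /setat eqxx. Qed.

Lemma setat_ne (n : nat) (T : Type) (f : 'I_n -> T) i j y :
  j != i -> setat f i y j = f j.
Proof. by rewrite /setat => /negbTE ->. Qed.

Lemma setat_setat (n : nat) (T : Type) (f : 'I_n -> T) i y z :
  setat (setat f i y) i z = setat f i z.
Proof. by apply: funext => j; rewrite /setat; case: (j == i). Qed.

Lemma all_psd_setat {R : realType} {n : nat} {C : 'I_n -> 'M[R]_n} {p X} :
  all_psd C -> psd X -> all_psd (setat C p X).
Proof. by move=> psdC psdX j; rewrite /setat; case: ifP. Qed.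

Section SlotFunction.
Context {R : realType} {n : nat} {F : ('I_n -> 'M[R]_n) -> R}.
Hypotheses (Fnn : F_nonneg F) (Fadd : F_multiadditive F)
  (Fvan : F_vanish_prop_rank1 F).
Context {C : 'I_n -> 'M[R]_n} {p q : 'I_n} {s : 'rV[R]_n}.
Hypotheses (psdC : all_psd C) (pq : p != q) (s_neq0 : s != 0)
  (Cq : C q = outer s).

Lemma F_setatD {X Y : 'M[R]_n} : psd X -> psd Y ->
  F (setat C p (X + Y)) = F (setat C p X) + F (setat C p Y).
Proof.
move=> psdX psdY; have := Fadd (setat C p X) p Y (all_psd_setat psdC psdX) psdY.
by rewrite setat_id !setat_setat.
Qed.

Lemma F_setat0 : F (setat C p 0) = 0.
Proof. by have := F_setatD psd0 psd0; rewrite addr0; lra. Qed.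

Lemma F_outer_parallel c : F (setat C p (outer (c *: s))) = 0.
Proof.
have [-> | c_neq0] := eqVneq c 0.
  by rewrite outerZ expr2 mul0r scale0r F_setat0.
have cs_neq0 : c *: s != 0 by rewrite scaler_eq0 negb_or c_neq0.
apply: (Fvan _ q p); rewrite 1?eq_sym //.
- exact: all_psd_setat (psd_outer _).
- by rewrite setat_ne 1?eq_sym // Cq rank_outer.
- by rewrite setat_id rank_outer.
- by exists (c ^+ 2); rewrite setat_id setat_ne 1?eq_sym // Cq outerZ.
Qed.

Lemma F_outer_translate (t : 'rV[R]_n) x :
  F (setat C p (outer (t + x *: s))) = F (setat C p (outer t)).
Proof.
pose f y := F (setat C p (outer (t + y *: s))).
have f_mid y h : f (y + h) + f (y - h) = f y + f y.
  have psd_outer2 (z : 'rV[R]_n) : psd (outer z + outer z).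
    by apply: psdD; apply: psd_outer.
  rewrite /f scalerDl scalerBl !addrA -(F_setatD (psd_outer _) (psd_outer _)).
  rewrite outer_parallelogram (F_setatD (psd_outer2 _) (psd_outer2 _)).
  rewrite !(F_setatD (psd_outer _) (psd_outer _)) F_outer_parallel.
  by rewrite !addr0.
have f_ge0 y : 0 <= f y by apply: Fnn; apply: all_psd_setat psdC (psd_outer _).
have := jensen_const_of_ge0 f_mid f_ge0 x.
by rewrite /f scale0r addr0.
Qed.

End SlotFunction.

Theorem lemma4 (R : realType) (n : nat) (hn : (2 <= n)%N)
  (F : ('I_n -> 'M[R]_n) -> R)
  (Fnn : F_nonneg F) (Fadd : F_multiadditive F) (Fvan : F_vanish_prop_rank1 F)
  (s t1 t2 : 'rV[R]_n) (hs : s != 0) (ht1 : t1 != 0) (ht2 : t2 != 0)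
  (hT : msum (cseg t1) (rline (cseg s)) = msum (cseg t2) (rline (cseg s))) :
  forall (p q : 'I_n), p != q ->
  forall E : 'I_n -> set 'rV[R]_n, (forall i, is_cellipsoid (E i)) ->
    G F (setat (setat E q (cseg s)) p (cseg t1))
    = G F (setat (setat E q (cseg s)) p (cseg t2)).
Proof.
move=> p q pq E _.
set C := setat (fun i => AE (E i)) q (outer s).
have psdC : all_psd C by apply: all_psd_setat (psd_outer _) => i; exact: AE_psd.
have Cq : C q = outer s by rewrite /C setat_id.
have G_cseg t : G F (setat (setat E q (cseg s)) p (cseg t)) = F (setat C p (outer t)).
  congr F; apply: funext => i; rewrite /C /setat.
  by case: (i == p); last case: (i == q); rewrite ?AE_cseg.
rewrite !G_cseg; case: (cseg_slab_eq_cases hT) => [[[c1 ->] [c2 ->]] | [a [l [a2 ->]]]].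
  by rewrite !(F_outer_parallel Fadd Fvan psdC pq hs Cq).
by rewrite outerZ a2 scale1r (F_outer_translate Fnn Fadd Fvan psdC pq hs Cq).
Qed.
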